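(* Let $\vec E$ be as in the context and fix an edge $b\in\Lambda^*$. The map $J_\Lambda\mapsto F_b(J_\Lambda)$ on $\mathbb{R}^{\Lambda^*}\setminus\mathcal C$ is a piecewise affine function with $$\frac{\partial F_b}{\partial J_e}(J_\Lambda)=\begin{cases}2\sigma_e(J_\Lambda)&\text{if } e\in\partial\mathcal D_b(J_\Lambda),\\ 0&\text{otherwise.}\end{cases}$$ Furthermore, this map extends uniquely to a continuous function on $\mathbb{R}^{\Lambda^*}$.
   Context: $\Lambda\subset\mathbb{Z}^d$ is a finite box, $\Lambda^*$ its set of nearest-neighbour edges. For spins $\eta$ and $e=\{x,y\}$, $\eta_e=\eta_x\eta_y$; $\mathcal S_\Lambda\subset\{-1,1\}^{\Lambda^*}$ is the set of edge configurations induced by spin configurations on $\Lambda$. $H_{\Lambda,J}(\eta)=-\sum_{e\in\Lambda^*}J_e\eta_e$ for $J_\Lambda\in\mathbb{R}^{\Lambda^*}$. $\vec E=(E(\eta,\eta'))_{\eta,\eta'\in\mathcal S_\Lambda}$ is a family of reals with $E(\eta,\eta)=0$ and $E(\eta,\eta'')=E(\eta,\eta')+E(\eta',\eta'')$. Critical set $\mathcal C=\bigcup_{\eta\ne\eta'}\{J_\Lambda:\sum_eJ_e(\eta_e-\eta'_e)=E(\eta,\eta')\}$. For $J_\Lambda\notin\mathcal C$, $\eta\prec\eta'$ iff $E(\eta,\eta')+H_{\Lambda,J}(\eta)-H_{\Lambda,J}(\eta')<0$, which is a strict total order on $\mathcal S_\Lambda$; $\sigma(J_\Lambda)$ is the $\prec$-minimal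 element (ground state map), and $\sigma^{\pm,b}(J_\Lambda)$ the $\prec$-minimal element among $\eta$ with $\eta_b=\pm1$. The critical droplet boundary is $\partial\mathcal D_b(J_\Lambda)=\{e\in\Lambda^*:\sigma^{+,b}_e(J_\Lambda)\ne\sigma^{-,b}_e(J_\Lambda)\}$, and the flexibility of $b$ is $$F_b(J_\Lambda)=\Big|-\sum_{e\in\Lambda^*}J_e\big(\sigma^{+,b}_e(J_\Lambda)-\sigma^{-,b}_e(J_\Lambda)\big)+E\big(\sigma^{+,b}(J_\Lambda),\sigma^{-,b}(J_\Lambda)\big)\Big|.$$ *)

From HB Require Import structures.
From mathcomp Require Import all_boot all_order all_algebra.
From mathcomp Require Import all_classical all_reals all_analysis.
Set Implicit Arguments. Unset Strict Implicit. Unset Printing Implicit Defensive.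
Import Order.TTheory GRing.Theory Num.Theory.
Local Open Scope ring_scope.

Section Ising.
Variable R : realType.
Variable d : nat.
(* side lengths of the box: the box is {0..n_0-1} x ... x {0..n_(d-1)-1},
   i.e. a finite box in Z^d up to translation *)
Variable n : 'I_d -> nat.

Definition site := {dffun forall i : 'I_d, 'I_(n i)}.

(* nearest neighbours: l^1 distance equal to 1 *)
Definition adj (x y : site) : bool :=
  (\sum_(i < d) ((x i - y i) + (y i - x i)))%N == 1%N.

Definition is_edge (e : {set site}) : bool :=
  [exists x, exists y, adj x y && (e == [set x; y])].

Definition edge := {e : {set site} | is_edge e}.

(* spin configurations on Lambda (true = +1, false = -1) *)
Definition spin := {ffun site -> bool}.
(* edge configurations in {-1,1}^{Lambda^*} (true = +1, false = -1) *)
Definition ecfg := {ffun edge -> bool}.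

Definition sgn (b : bool) : R := if b then 1 else -1.

(* eta_e = eta_x eta_y for e = {x,y} *)
Definition induced (s : spin) : ecfg :=
  [ffun e : edge => [forall x in val e, forall y in val e, s x == s y]].

Definition SL : {set ecfg} := [set induced s | s : spin].

Definition Ham (J : edge -> R) (eta : ecfg) : R :=
  - \sum_(e : edge) J e * sgn (eta e).

Variable E : ecfg -> ecfg -> R.

Definition critical (J : edge -> R) : Prop :=
  exists eta eta', [/\ eta \in SL, eta' \in SL, eta != eta' &
    \sum_(e : edge) J e * (sgn (eta e) - sgn (eta' e)) = E eta eta'].

Definition prec (J : edge -> R) (eta eta' : ecfg) : bool :=
  E eta eta' + Ham J eta - Ham J eta' < 0.

(* the prec-minimal element of S_Lambda among those satisfying P
   (a junk default value is returned if none exists, e.g. on C) *)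
Definition argmin_prec (J : edge -> R) (P : pred ecfg) : ecfg :=
  odflt [ffun=> true]
    [pick eta in SL | P eta &&
       [forall eta', ((eta' \in SL) && P eta' && (eta' != eta)) ==>
                     prec J eta eta']].

Definition gs (J : edge -> R) : ecfg := argmin_prec J predT.

(* sigma^{+,b}(J) (pm = true) and sigma^{-,b}(J) (pm = false) *)
Definition gs_b (J : edge -> R) (b : edge) (pm : bool) : ecfg :=
  argmin_prec J (fun eta => eta b == pm).

Definition droplet_boundary (J : edge -> R) (b : edge) : {set edge} :=
  [set e | gs_b J b true e != gs_b J b false e].

Definition flex (b : edge) (J : edge -> R) : R :=
  `| - (\sum_(e : edge) J e * (sgn (gs_b J b true e) - sgn (gs_b J b false e)))
     + E (gs_b J b true) (gs_b J b false) |.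

Definition coupling_shift (J : edge -> R) (e : edge) (t : R) : edge -> R :=
  fun e' => J e' + (if e' == e then t else 0).

End Ising.

(* Because E is a cocycle on S_Lambda, eta < eta' compares the potentials
   V_J(eta) = E(eta, eta_ref) + H_J(eta), which are affine in J, and J is critical
   exactly when two potentials coincide.  Off C, F_b(J) = |V_J(x+) - V_J(x-)| where
   x+ and x- minimise V_J under eta_b = +1 and eta_b = -1.  Taking these minimisers
   for every J gives a function that is Lipschitz (minima of finitely many affine
   functions), hence the continuous extension.  Near a non-critical J the strict
   inequalities between the finitely many potentials persist, so x+, x- and the
   sign of V_J(x+) - V_J(x-) are locally constant and F_b is locally affine, with
   slope +-2 exactly on the edges where x+ and x- differ.  Uniqueness comes from
   the density of the complement of C: along u_e = 2^(rank e), which separates all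
   configurations by uniqueness of binary expansions, each critical hyperplane is
   crossed at most once. *)

From Pilot Require Import Defs.
From HB Require Import structures.
From mathcomp Require Import all_boot all_order all_algebra.
From mathcomp Require Import all_classical all_reals all_analysis.
From mathcomp Require Import lra ring.
Import Order.TTheory GRing.Theory Num.Theory.
Import numFieldNormedType.Exports ArrowAsUniformType.
Set Implicit Arguments.
Unset Strict Implicit.
Local Open Scope ring_scope.

Section BinaryExpansion.
Variable R : realFieldType.

Lemma norm_sum_pow2_le N (c : 'I_N -> R) (a : R) : 0 <= a ->
  (forall i, `|c i| <= a) -> `|\sum_(i < N) c i * 2 ^+ i| <= a * (2 ^+ N - 1).
Proof.
move=> a0; elim: N c => [|N IH] c hc.
  by rewrite big_ord0 normr0 expr0 subrr mulr0.
rewrite big_ord_recr /= exprS.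
have hN : `|c ord_max * 2 ^+ N| <= a * 2 ^+ N.
  by rewrite normrM [`|2 ^+ N|]ger0_norm ?exprn_ge0 // ler_wpM2r ?exprn_ge0.
have := IH (fun i => c (widen_ord (leqnSn N) i)) (fun i => hc _).
have := ler_normD (\sum_(i < N) c (widen_ord (leqnSn N) i) * 2 ^+ i)
  (c ord_max * 2 ^+ N).
lra.
Qed.

Lemma sum_pow2_eq0 N (c : 'I_N -> R) (a : R) : 0 < a ->
  (forall i, c i = 0 \/ `|c i| = a) -> \sum_(i < N) c i * 2 ^+ i = 0 ->
  forall i, c i = 0.
Proof.
move=> a0; elim: N c => [|N IH] c hc + i; first by case: i.
rewrite big_ord_recr /= => hs.
have cN : c ord_max = 0.
  have [//|cNa] := hc ord_max.
  have hc' j : `|c (widen_ord (leqnSn N) j)| <= a.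
    by case: (hc (widen_ord (leqnSn N) j)) => ->; rewrite ?normr0 ?lexx // ltW.
  have := @norm_sum_pow2_le _ _ _ (ltW a0) hc'.
  have -> : \sum_(i < N) c (widen_ord (leqnSn N) i) * 2 ^+ i = - (c ord_max * 2 ^+ N).
    by apply/eqP; rewrite -addr_eq0 hs.
  rewrite normrN normrM cNa ger0_norm ?exprn_ge0 //.
  have : 0 < 2 ^+ N :> R by exact: exprn_gt0.
  nra.
move: hs; rewrite cN mul0r addr0 => /(IH _ (fun i => hc _)) cN'.
have [->//|iN] := eqVneq i ord_max.
have ltiN : (i < N)%N.
  by rewrite ltn_neqAle -ltnS ltn_ord andbT; apply: contra iN => /eqP iN; apply/eqP/val_inj.
by have := cN' (Ordinal ltiN); congr (c _ = 0); apply: val_inj.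
Qed.

End BinaryExpansion.

Lemma continuous_eq_dense (T : topologicalType) (R : realFieldType) (D : set T)
    (f g : T -> R) :
  dense D -> continuous f -> continuous g -> (forall x, D x -> f x = g x) ->
  f = g.
Proof.
move=> dD cf cg fgD; apply/funext => x; apply: contrapT => fgx.
pose O := ((f - g) @^-1` ~` [set 0])%classic.
have oO : open O.
  apply: open_comp => [y _|]; first exact: continuousB (cf y) (cg y).
  by rewrite openC; exact: closed_eq.
have Ox : O x by change (f x - g x <> 0); move/eqP; rewrite subr_eq0 => /eqP.
have [y [Oy Dy]] := dD O (ex_intro _ x Ox) oO.
by apply: Oy; change (f y - g y = 0); rewrite fgD // subrr.
Qed.

Lemma dnbhs0_neq (R : realFieldType) (t0 : R) :
  \forall t \near (0 : R)^'%classic, t != t0.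
Proof.
have [->|t0_neq0] := eqVneq t0 0; first exact: nbhs_dnbhs_neq.
have t0_gt0 : 0 < `|t0| by rewrite normr_gt0.
apply: filterS (dnbhs0_lt t0_gt0) => t.
by apply: contraTneq => ->; rewrite ltxx.
Qed.

Lemma arg_min_dist (I : finType) (R : realDomainType) (i0 : I) (P : pred I)
    (f g : I -> R) (eps : R) :
  P i0 -> (forall i, `|f i - g i| < eps) ->
  `|f (Order.arg_min i0 P f) - g (Order.arg_min i0 P g)| < eps.
Proof.
move=> Pi0 fg; case: arg_minP => // i Pi fmin; case: arg_minP => // j Pj gmin.
have := fmin j Pj; have := gmin i Pi; have := fg i; have := fg j.
rewrite !ltr_norml => /andP[? ?] /andP[? ?] ? ?; apply/andP; split; lra.
Qed.

Section IsingCouplings.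
Variables (R : realType) (d : nat) (n : 'I_d -> nat).
Local Notation T := (edge n).
Local Notation cfg := (ecfg n).
Local Notation sgn := (sgn R).

Lemma sgn_inj : injective sgn.
Proof. by case; case => //; rewrite /Defs.sgn => h; exfalso; lra. Qed.

Lemma norm_sgn b : `|sgn b| = 1.
Proof. by case: b; rewrite /Defs.sgn ?normrN normr1. Qed.

Lemma sum_sgnB (J : T -> R) (x y : cfg) :
  \sum_e J e * (sgn (x e) - sgn (y e)) = Ham J y - Ham J x.
Proof. by rewrite /Defs.Ham opprK addrC -sumrB; apply: eq_bigr => e _; rewrite mulrBr. Qed.

Lemma Ham_shift (J v : T -> R) (t : R) (x : cfg) :
  Ham (fun e => J e + t * v e) x = Ham J x + t * Ham v x.
Proof.
rewrite /Defs.Ham mulrN -opprD mulr_sumr -big_split /=.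
by congr (- _); apply: eq_bigr => e _; rewrite mulrDl mulrA.
Qed.

Lemma coupling_shiftE (J : T -> R) (e : T) (t : R) :
  coupling_shift J e t = (fun e' => J e' + t * (e' == e)%:R).
Proof.
by apply/funext => e'; rewrite /coupling_shift; case: eqP; rewrite ?mulr1 ?mulr0.
Qed.

Lemma Ham_indicator (e : T) (x : cfg) : Ham (fun e' => (e' == e)%:R) x = - sgn (x e).
Proof.
rewrite /Defs.Ham (bigD1 e) //= eqxx mul1r big1 ?addr0 // => e' /negbTE ->.
by rewrite mul0r.
Qed.

Lemma Ham_near (J : T -> R) (eps : R) : 0 < eps ->
  \forall J' \near J, forall x, `|Ham J' x - Ham J x| < eps.
Proof.
move=> eps_gt0; pose N : R := #|{: T}|%:R.
have r_gt0 : 0 < eps / (N + 1) by rewrite divr_gt0 // ltr_wpDl.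
apply/nbhs_ballP; exists (eps / (N + 1)) => // J' JJ' x.
have -> : Ham J' x - Ham J x = \sum_e (J e - J' e) * sgn (x e).
  by rewrite /Defs.Ham opprK addrC -sumrB; apply: eq_bigr => e _; rewrite mulrBl.
apply: (le_lt_trans (ler_norm_sum _ _ _)).
apply: (@le_lt_trans _ _ (\sum_(e : T) eps / (N + 1))).
  by apply: ler_sum => e _; rewrite normrM norm_sgn mulr1; exact: ltW (JJ' e).
rewrite sumr_const -mulr_natr -/N.
have : eps / (N + 1) * (N + 1) = eps by rewrite divfK // lt0r_neq0 // ltr_wpDl.
lra.
Qed.

Lemma near_shift (J v : T -> R) (P : (T -> R) -> Prop) :
  (\forall J' \near J, P J') -> \forall t \near 0, P (fun e => J e + t * v e).
Proof.
move=> /nbhs_ballP[r r_gt0 JP]; pose M := \sum_e `|v e| + 1.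
have M_gt0 : 0 < M by rewrite ltr_wpDl ?sumr_ge0.
apply: filterS (nbhs0_lt (divr_gt0 r_gt0 M_gt0)) => t; rewrite ltr_pdivlMr // => tM.
apply: JP => e; change (`|J e - (J e + t * v e)| < r); apply: le_lt_trans tM.
have veM : `|v e| <= M by rewrite /M (bigD1 e) //= -addrA lerDl addr_ge0 ?sumr_ge0.
rewrite opprD addNKr normrN normrM; exact: ler_wpM2l.
Qed.

Definition pow2_coupling (e : T) : R := 2 ^+ enum_rank e.

Lemma Ham_pow2_inj : injective (Ham pow2_coupling).
Proof.
move=> x y Hxy; apply/ffunP => e.
have : \sum_(i < #|{: T}|) (sgn (x (enum_val i)) - sgn (y (enum_val i))) * 2 ^+ i =
       Ham pow2_coupling y - Ham pow2_coupling x.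
  rewrite -sum_sgnB (reindex _ (onW_bij _ (@enum_val_bij T))) /=.
  by apply: eq_bigr => i _; rewrite /pow2_coupling enum_valK mulrC.
have sgnB (u v : bool) : sgn u - sgn v = 0 \/ `|sgn u - sgn v| = 2.
  by case: u; case: v; rewrite /Defs.sgn; [left | right | right | left];
    rewrite ?subrr // ?opprK -?opprD ?normrN ger0_norm.
rewrite Hxy subrr => /(@sum_pow2_eq0 R _ _ 2 ltac:(lra) (fun i => sgnB _ _)).
by move=> /(_ (enum_rank e)); rewrite enum_rankK => /eqP; rewrite subr_eq0 => /eqP /sgn_inj.
Qed.

End IsingCouplings.

Section GroundStates.
Variables (R : realType) (d : nat) (n : 'I_d -> nat) (E : ecfg n -> ecfg n -> R).
Hypothesis hE0 : forall eta, eta \in SL n -> E eta eta = 0.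
Hypothesis hEc : forall eta eta' eta'', eta \in SL n -> eta' \in SL n -> eta'' \in SL n ->
  E eta eta'' = E eta eta' + E eta' eta''.
Local Notation T := (edge n).
Local Notation cfg := (ecfg n).
Local Notation sgn := (sgn R).

Definition ref_cfg : cfg := Defs.induced ([ffun=> true] : spin n).

Lemma ref_cfg_SL : ref_cfg \in SL n.
Proof. exact: imset_f. Qed.

Definition potential (J : T -> R) (x : cfg) : R := E x ref_cfg + Ham J x.

Lemma E_ref x y : x \in SL n -> y \in SL n -> E x y = E x ref_cfg - E y ref_cfg.
Proof.
move=> xS yS; rewrite (hEc xS ref_cfg_SL yS).
have := hEc yS ref_cfg_SL yS; rewrite hE0 //; lra.
Qed.

Lemma precE J x y : x \in SL n -> y \in SL n ->
  prec E J x y = (potential J x < potential J y).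
Proof.
move=> xS yS; rewrite /prec E_ref // -[RHS]subr_lt0.
by congr (_ < _); rewrite /potential; ring.
Qed.

Lemma noncriticalP J : ~ critical E J <-> {in SL n &, injective (potential J)}.
Proof.
split=> [nc x y xS yS exy | inj [x [y [xS yS /eqP nxy]]]].
  apply/eqP; apply: contraT => nxy; case: nc; exists x, y; split => //.
  by rewrite sum_sgnB E_ref //; move: exy; rewrite /potential; lra.
by rewrite sum_sgnB E_ref // => h; apply/nxy/inj => //; rewrite /potential; lra.
Qed.

Lemma potential_neq J x y : ~ critical E J -> x \in SL n -> y \in SL n -> x != y ->
  potential J x != potential J y.
Proof. by move=> /noncriticalP inj xS yS; apply: contra => /eqP /inj ->. Qed.

Lemma argmin_precE J (P : pred cfg) x : ~ critical E J -> x \in SL n -> P x ->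
  (forall y, y \in SL n -> P y -> potential J x <= potential J y) -> argmin_prec E J P = x.
Proof.
move=> nc xS Px xmin; have xlt y : y \in SL n -> P y -> y != x -> prec E J x y.
  by move=> yS Py nyx; rewrite precE // lt_neqAle xmin // potential_neq // eq_sym.
rewrite /argmin_prec; case: pickP => [z /andP[zS /andP[Pz /forallP zmin]] | none] /=.
  apply: contraTeq (zmin x) => nzx; rewrite xS Px eq_sym nzx /= precE //.
  by rewrite -leNgt xmin.
have /negbT := none x; rewrite xS Px /= => /negP[].
by apply/forallP => y; apply/implyP => /andP[/andP[yS Py] nyx]; exact: xlt.
Qed.

Lemma potential_shift (J v : T -> R) (t : R) x :
  potential (fun e => J e + t * v e) x = potential J x + t * Ham v x.
Proof. by rewrite /potential Ham_shift addrA. Qed.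

Lemma potential_near J eps : 0 < eps ->
  \forall J' \near J, forall x, `|potential J' x - potential J x| < eps.
Proof.
move=> eps_gt0; apply: filterS (Ham_near J eps_gt0) => J' JJ' x.
by rewrite /potential opprD addrACA subrr add0r.
Qed.

Definition keeps_order (J J' : T -> R) : Prop :=
  forall x y, potential J x < potential J y -> potential J' x < potential J' y.

Lemma keeps_order_near J : \forall J' \near J, keeps_order J J'.
Proof.
apply: (filter_forall (nbhs_filter J)) => x.
apply: (filter_forall (nbhs_filter J)) => y.
case: ltP => [lt_xy|]; last by move=> _; apply: nearW.
have gap_gt0 : 0 < (potential J y - potential J x) / 2 by rewrite divr_gt0 // subr_gt0.
apply: filterS (potential_near J gap_gt0) => J' JJ' _.
by move: (JJ' x) (JJ' y); rewrite !ltr_norml => /andP[? ?] /andP[? ?]; lra.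
Qed.

Lemma keeps_orderE J J' x y : keeps_order J J' -> potential J x != potential J y ->
  (potential J' x < potential J' y) = (potential J x < potential J y).
Proof.
move=> JJ' nxy; case: (ltgtP (potential J x) (potential J y)) nxy => //.
  by move=> /JJ' ->.
move=> /JJ' lt_yx _.
by apply/negbTE; rewrite -leNgt ltW.
Qed.

Lemma keeps_order_noncritical J J' : keeps_order J J' ->
  ~ critical E J -> ~ critical E J'.
Proof.
move=> JJ' /noncriticalP inj; apply/noncriticalP => x y xS yS exy.
apply: inj => //; apply/eqP; rewrite eq_le !leNgt.
by apply/andP; split; apply/negP => /JJ'; rewrite exy ltxx.
Qed.

Lemma noncritical_dense : dense [set J : T -> R | ~ critical E J]%classic.
Proof.
move=> O [J OJ] oO; have nO : \forall J' \near J, O J' by apply: open_nbhs_nbhs.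
pose u := pow2_coupling R (n := n); pose Ju t e := J e + t * u e.
have shiftO : \forall t \near (0 : R)^'%classic, O (Ju t).
  exact: nbhs_dnbhs (near_shift u nO).
have shift_inj : \forall t \near (0 : R)^'%classic,
    forall x y, x != y -> potential (Ju t) x != potential (Ju t) y.
  apply: (filter_forall (dnbhs_filter _)) => x.
  apply: (filter_forall (dnbhs_filter _)) => y.
  have [->|nxy] := eqVneq x y; first by apply: nearW => t; rewrite eqxx.
  have du : Ham u x - Ham u y != 0 by rewrite subr_eq0 (inj_eq (@Ham_pow2_inj _ _ _)).
  pose t0 := (potential J y - potential J x) / (Ham u x - Ham u y).
  apply: filterS (dnbhs0_neq t0) => t + _.
  apply: contra => /eqP; rewrite !potential_shift => exy; apply/eqP/(mulIf du).
  by rewrite /t0 divfK // mulrBr; lra.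
have [t [Ot tinj]] := filter_ex (filterI shiftO shift_inj).
exists (Ju t); split => //=; apply/noncriticalP => x y _ _ exy.
by apply/eqP; apply: contraT => /tinj; rewrite exy eqxx.
Qed.

Variable b : edge n.

Lemma exists_b_cfg (pm : bool) : exists x, (x \in SL n) && (x b == pm).
Proof.
have [x0 /existsP[y0 /andP[adj_xy /eqP b_xy]]] := existsP (valP b).
have nxy : x0 != y0.
  by apply: contraTneq adj_xy => ->; rewrite /adj big1 // => i _; rewrite subnn.
case: pm.
  exists ref_cfg; rewrite ref_cfg_SL /= ffunE eqb_id.
  by apply/forall_inP => ? _; apply/forall_inP => ? _; rewrite !ffunE.
exists (Defs.induced [ffun z => z == x0]); rewrite imset_f //= ffunE eqbF_neg.
apply/negP => /forall_inP/(_ x0); rewrite b_xy set21 => /(_ isT)/forall_inP/(_ y0).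
by rewrite set22 !ffunE eqxx (eq_sym y0) (negbTE nxy) => /(_ isT).
Qed.

Definition argmin_b J pm : cfg :=
  Order.arg_min (xchoose (exists_b_cfg pm))
    (fun x => (x \in SL n) && (x b == pm)) (potential J).

Lemma argmin_bP J pm : [/\ argmin_b J pm \in SL n, argmin_b J pm b = pm &
  forall y, y \in SL n -> y b = pm -> potential J (argmin_b J pm) <= potential J y].
Proof.
rewrite /argmin_b; case: arg_minP => [|x /andP[xS /eqP xb] xmin].
  exact: xchooseP (exists_b_cfg pm).
by split => // y yS yb; apply: xmin; rewrite yS yb eqxx.
Qed.

Lemma argmin_b_neq J : argmin_b J true != argmin_b J false.
Proof.
have [_ tb _] := argmin_bP J true; have [_ fb _] := argmin_bP J false.
by apply: contraTneq isT => tf; rewrite -tb tf fb.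
Qed.

Lemma gs_bE J pm : ~ critical E J -> gs_b E J b pm = argmin_b J pm.
Proof.
move=> nc; have [xS xb xmin] := argmin_bP J pm.
by apply: argmin_precE => //; [apply/eqP | move=> y yS /eqP; apply: xmin].
Qed.

Lemma gs_b_keeps_order J J' pm : keeps_order J J' -> ~ critical E J ->
  gs_b E J' b pm = argmin_b J pm.
Proof.
move=> JJ' nc; have [xS xb xmin] := argmin_bP J pm.
apply: argmin_precE => //; [exact: keeps_order_noncritical nc | exact/eqP|].
move=> y yS /eqP yb; have [<-|nxy] := eqVneq (argmin_b J pm) y; first exact: lexx.
by apply/ltW/JJ'; rewrite lt_neqAle potential_neq // xmin.
Qed.

Definition min_potential J pm : R := potential J (argmin_b J pm).

Lemma min_potential_neq J : ~ critical E J -> min_potential J true != min_potential J false.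
Proof.
have [tS _ _] := argmin_bP J true; have [fS _ _] := argmin_bP J false.
by move=> nc; rewrite potential_neq // argmin_b_neq.
Qed.

Definition flex_ext J : R := `|min_potential J true - min_potential J false|.

Lemma flexE J : ~ critical E J -> flex E b J = flex_ext J.
Proof.
move=> nc; have [tS _ _] := argmin_bP J true; have [fS _ _] := argmin_bP J false.
rewrite /flex !gs_bE // sum_sgnB E_ref //; congr `|_|.
by rewrite /min_potential /potential; ring.
Qed.

Lemma min_potential_near J pm eps : 0 < eps ->
  \forall J' \near J, `|min_potential J' pm - min_potential J pm| < eps.
Proof.
move=> eps_gt0; apply: filterS (potential_near J eps_gt0) => J' JJ'.
exact: arg_min_dist (xchooseP (exists_b_cfg pm)) JJ'.
Qed.

Lemma flex_ext_continuous : continuous flex_ext.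
Proof.
move=> J; apply/(cvgrPdist_lt (FF := nbhs_filter J)) => eps eps_gt0.
have eps2_gt0 : 0 < eps / 2 by rewrite divr_gt0.
apply: filterS2 (@min_potential_near J true _ eps2_gt0)
  (@min_potential_near J false _ eps2_gt0).
move=> J' ht hf; apply: le_lt_trans (ler_dist_dist _ _) _.
by move: ht hf; rewrite !ltr_norml => /andP[? ?] /andP[? ?]; apply/andP; split; lra.
Qed.

Definition gs_plus J : bool := min_potential J true < min_potential J false.

Lemma flex_ext_gs_plus J : ~ critical E J ->
  flex_ext J = sgn (gs_plus J) * (min_potential J false - min_potential J true).
Proof.
move=> nc; rewrite /flex_ext /gs_plus /Defs.sgn.
case: ltgtP (min_potential_neq nc) => // h _.
  by rewrite ltr0_norm ?subr_lt0 //; ring.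
by rewrite gtr0_norm ?subr_gt0 //; ring.
Qed.

Lemma gsE J : ~ critical E J ->
  gs E J = if gs_plus J then argmin_b J true else argmin_b J false.
Proof.
move=> nc; have [tS tb tmin] := argmin_bP J true; have [fS fb fmin] := argmin_bP J false.
have ymin y : y \in SL n -> min_potential J (y b) <= potential J y.
  by move=> yS; case yb: (y b); [apply: tmin | apply: fmin].
apply: argmin_precE => //; first by case: ifP.
move=> y yS _; apply: le_trans (ymin y yS); rewrite /gs_plus.
by case: ltgtP (min_potential_neq nc) => // h _; case: (y b); rewrite /= ?lexx // ltW.
Qed.

Lemma flex_near J : ~ critical E J -> \forall J' \near J,
  flex E b J' =
  sgn (gs_plus J) * (potential J' (argmin_b J false) - potential J' (argmin_b J true)).
Proof.
move=> nc; apply: filterS (keeps_order_near J) => J' JJ'.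
have nc' := keeps_order_noncritical JJ' nc.
have argmin_bE pm : argmin_b J' pm = argmin_b J pm.
  by rewrite -gs_bE // (gs_b_keeps_order pm JJ').
rewrite flexE // flex_ext_gs_plus // /gs_plus /min_potential !argmin_bE.
by rewrite (keeps_orderE JJ') // min_potential_neq.
Qed.

(* The affine piece indexed by (x, y, s) is J |-> sgn s * (potential J x - potential J y). *)
Definition piece_at J : cfg * cfg * bool := (argmin_b J false, argmin_b J true, gs_plus J).

Definition piece_slope (p : cfg * cfg * bool) (e : T) : R :=
  sgn p.2 * (sgn (p.1.2 e) - sgn (p.1.1 e)).

Definition piece_offset (p : cfg * cfg * bool) : R :=
  sgn p.2 * (E p.1.1 ref_cfg - E p.1.2 ref_cfg).

Lemma flex_locally_affine J : ~ critical E J -> \forall J' \near J,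
  flex E b J' = piece_offset (piece_at J) + \sum_e piece_slope (piece_at J) e * J' e.
Proof.
move=> nc; apply: filterS (flex_near nc) => J' ->; rewrite /piece_slope /=.
under eq_bigr do rewrite -mulrA [_ * J' _]mulrC.
by rewrite -mulr_sumr sum_sgnB /potential /piece_offset /=; ring.
Qed.

Lemma flex_coupling_shift_near J e : ~ critical E J -> \forall t \near 0,
  flex E b J + t * piece_slope (piece_at J) e = flex E b (coupling_shift J e t).
Proof.
move=> nc; have flexJ := nbhs_singleton (flex_near nc).
apply: filterS (near_shift (fun e' => (e' == e)%:R) (flex_near nc)) => t.
rewrite coupling_shiftE flexJ => ->.
by rewrite !potential_shift !Ham_indicator /piece_slope /=; ring.
Qed.

Lemma piece_slope_droplet J e : ~ critical E J -> piece_slope (piece_at J) e =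
  if e \in droplet_boundary E J b then 2 * sgn (gs E J e) else 0.
Proof.
move=> nc; rewrite /droplet_boundary inE !gs_bE // gsE // /piece_slope /=.
by case: (gs_plus J) => /=; case: (argmin_b J true e); case: (argmin_b J false e);
  rewrite /Defs.sgn /=; ring.
Qed.

End GroundStates.

Unset Implicit Arguments.
Set Strict Implicit.

Theorem lemma2p7 (R : realType) (d : nat) (n : 'I_d -> nat)
  (E : ecfg n -> ecfg n -> R)
  (hE0 : forall eta, eta \in SL n -> E eta eta = 0)
  (hEc : forall eta eta' eta'', eta \in SL n -> eta' \in SL n -> eta'' \in SL n ->
           E eta eta'' = E eta eta' + E eta' eta'')
  (b : edge n) :
  (* piecewise affine: finitely many affine pieces, F_b locally equal to one
     of them around every point off C *)
  (exists (k : nat) (a : 'I_k -> edge n -> R) (c : 'I_k -> R),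
     forall J : edge n -> R, ~ critical E J ->
       exists i : 'I_k, \forall J' \near J,
         flex E b J' = c i + \sum_(e : edge n) a i e * J' e)
  /\
  (* partial derivatives *)
  (forall (J : edge n -> R) (e : edge n), ~ critical E J ->
     is_derive (0 : R) (1 : R) (fun t : R => flex E b (coupling_shift J e t))
       (if e \in droplet_boundary E J b then 2 * sgn R (gs E J e) else 0))
  /\
  (* existence of a continuous extension to R^{Lambda^*} *)
  (exists G : (edge n -> R) -> R, continuous G /\
     forall J, ~ critical E J -> G J = flex E b J)
  /\
  (* uniqueness of the continuous extension *)
  (forall G1 G2 : (edge n -> R) -> R, continuous G1 -> continuous G2 ->
     (forall J, ~ critical E J -> G1 J = flex E b J) ->
     (forall J, ~ critical E J -> G2 J = flex E b J) ->
     G1 = G2).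
Proof.
split.
  exists #|{: ecfg n * ecfg n * bool}|.
  exists (fun i => piece_slope R (enum_val i)), (fun i => piece_offset E (enum_val i)).
  move=> J nc; exists (enum_rank (piece_at E b J)); rewrite enum_rankK.
  exact (flex_locally_affine hE0 hEc b nc).
split.
  move=> J e nc; apply: near_eq_is_derive (flex_coupling_shift_near hE0 hEc b e nc) _.
  apply: is_derive_eq; rewrite scale0r !add0r mul1r -(piece_slope_droplet hE0 hEc b e nc).
  exact: mulr1.
split.
  exists (flex_ext E b); split; first exact: flex_ext_continuous.
  by move=> J nc; rewrite (flexE hE0 hEc).
move=> G1 G2 cG1 cG2 G1E G2E.
apply: continuous_eq_dense (noncritical_dense hE0 hEc) cG1 cG2 _.
by move=> J nc; rewrite G1E // G2E.
Qed.
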